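(* Let $\psi$ be a difference-of-ratios (DoR) fairness property, let $\pi$ be a Static-Fair shield with period $T$, and let $\tau=\tau_1\cdots\tau_m\in\mathtt{FT}^{mT}_{\theta,\pi}$ with $|\tau_i|=T$ for all $i\le m$. If $\mathtt{den}^g(\tau_i)=\mathtt{den}^g(\tau_j)$ for all $i,j\le m$ and $g\in\{a,b\}$, then $\psi(\tau)\le\kappa$.
   Context: Input space $\mathcal{X}=\{a,b\}\times\{0,1\}\times\mathbb{C}$ ($\mathbb{C}\subset\mathbb{R}_{\ge0}$ finite; an input $x=(g,r,c)$ is group, recommended decision, intervention cost), output space $\mathcal{Y}=\{0,1\}$, input distribution $\theta\in\mathcal{D}(\mathcal{X})$, bias threshold $\kappa$. A shield is $\pi:(\mathcal{X}\times\mathcal{Y})^*\times\mathcal{X}\to\mathcal{Y}$, and $\Pi^T$ the shields defined on $(\mathcal{X}\times\mathcal{Y})^{\le T}\times\mathcal{X}$. $\mathtt{FT}^t_{\theta,\pi}$: traces $(x_1,y_1)\dots(x_t,y_t)$ with $\theta(x_i)>0$ and $y_i=\pi((x_1,y_1)\dots(x_{i-1},y_{i-1}),x_i)$. $\mathit{cost}(\tau)=\sum c_i\mathbb{1}[r_i\ne y_i]$, $\mathbb{E}[\mathit{cost};\theta,\pi,T]=\sum_{\tau\in(\mathcal{X}\times\mathcal{Y})^T}\mathit{cost}(\tau)\prod\theta(x_i)\mathbb{1}[\tau\in\mathtt{FT}^T_{\theta,\pi}]$. A statistic is single-counter if it maps traces to $\mathbb{N}$, additive if $\mu(\tau\tau')=\mu(\tau)+\mu(\tau')$.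 $\psi$ is DoR if for each group $g$ the welfare is $\mathtt{WF}^g(\tau)=\mathtt{num}^g(\tau)/\mathtt{den}^g(\tau)$ with $\mathtt{num}^g,\mathtt{den}^g$ additive single-counter statistics, and $\psi(\tau)=|\mathtt{WF}^a(\tau)-\mathtt{WF}^b(\tau)|$ (with $\psi=0$ if a welfare is undefined). A finite-horizon (FinHzn) shield for horizon $T$ is $\pi^*\in\arg\min_{\pi\in\Pi_{\mathtt{fair}}^{\theta,T}}\mathbb{E}[\mathit{cost};\theta,\pi,T]$ with $\Pi_{\mathtt{fair}}^{\theta,T}=\{\pi\in\Pi^T:\forall\tau\in\mathtt{FT}^T_{\theta,\pi},\psi(\tau)\le\kappa\}$. The concatenation of shields $\pi_1,\pi_2,\dots\in\Pi^T$ is the shield $\pi$ with $\pi(\tau\tau',x)=\pi_{j+1}(\tau',x)$ whenever $|\tau|=jT$ and $|\tau'|<T$. A Static-Fair shield is the concatenation of infinitely many copies of one FinHzn shield. *)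

From HB Require Import structures.
From mathcomp Require Import all_boot all_order all_algebra.
From mathcomp Require Import reals.
Set Implicit Arguments. Unset Strict Implicit. Unset Printing Implicit Defensive.
Import Order.TTheory GRing.Theory Num.Theory.
Local Open Scope ring_scope.

Inductive grp := ga | gb.
Definition grp_code (g : grp) : bool := if g is ga then true else false.
Definition grp_decode (b : bool) : grp := if b then ga else gb.
Lemma grp_codeK : cancel grp_code grp_decode. Proof. by case. Qed.
HB.instance Definition _ := Equality.copy grp (can_type grp_codeK).
HB.instance Definition _ := Finite.copy grp (can_type grp_codeK).

Section Shields.
Variable R : realType.
Variable C : seq R.  (* the finite set C of intervention costs *)

Definition X := (grp * bool * seq_sub C)%type.
Definition grp_of (x : X) : grp := x.1.1.
Definition rec_of (x : X) : bool := x.1.2.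
Definition cost_of (x : X) : R := ssval x.2.

Definition trace := seq (X * bool).
(* A shield: (X x Y)^* x X -> Y.  A shield of Pi^T is modelled as a total
   function; only its values on traces of length <= T are ever used. *)
Definition shield := trace -> X -> bool.

Definition distribution (theta : {ffun X -> R}) :=
  (forall x, 0 <= theta x) /\ \sum_x theta x = 1.

Fixpoint ft_from (theta : {ffun X -> R}) (pi : shield) (p tau : trace) : bool :=
  match tau with
  | [::] => true
  | (x, y) :: s => [&& 0 < theta x, y == pi p x & ft_from theta pi (rcons p (x, y)) s]
  end.
Definition FT (theta : {ffun X -> R}) (pi : shield) (t : nat) (tau : trace) : bool :=
  (size tau == t) && ft_from theta pi [::] tau.

Definition cost (tau : trace) : R :=
  \sum_(xy <- tau) cost_of xy.1 * (rec_of xy.1 != xy.2)%:R.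

Definition exp_cost (theta : {ffun X -> R}) (pi : shield) (T : nat) : R :=
  \sum_(tau : T.-tuple (X * bool))
     cost tau * (\prod_(xy <- tau) theta xy.1) * (FT theta pi T tau)%:R.

Definition statistic := trace -> nat.
Definition additive_stat (mu : statistic) :=
  forall tau tau' : trace, mu (tau ++ tau') = (mu tau + mu tau')%N.

(* Difference-of-ratios property built from num^g, den^g;
   psi = 0 if a welfare is undefined (zero denominator). *)
Definition dor (num den : grp -> statistic) (tau : trace) : R :=
  if (den ga tau == 0%N) || (den gb tau == 0%N) then 0
  else `| (num ga tau)%:R / (den ga tau)%:R - (num gb tau)%:R / (den gb tau)%:R |.

Definition is_DoR_decomp (num den : grp -> statistic) :=
  forall g, additive_stat (num g) /\ additive_stat (den g).

Definition fair (theta : {ffun X -> R}) (psi : trace -> R) (kappa : R)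
    (T : nat) (pi : shield) :=
  forall tau, FT theta pi T tau -> psi tau <= kappa.

Definition FinHzn (theta : {ffun X -> R}) (psi : trace -> R) (kappa : R)
    (T : nat) (pistar : shield) :=
  fair theta psi kappa T pistar /\
  forall pi', fair theta psi kappa T pi' ->
    exp_cost theta pistar T <= exp_cost theta pi' T.

Definition concatenation (T : nat) (pis : nat -> shield) (pi : shield) :=
  forall (j : nat) (tau tau' : trace) (x : X),
    size tau = (j * T)%N -> (size tau' < T)%N ->
    pi (tau ++ tau') x = pis j.+1 tau' x.

Definition StaticFair (theta : {ffun X -> R}) (psi : trace -> R) (kappa : R)
    (T : nat) (pi : shield) :=
  exists pistar, FinHzn theta psi kappa T pistar /\
                 concatenation T (fun _ => pistar) pi.

End Shields.

From HB Require Import structures.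
From mathcomp Require Import all_boot all_order all_algebra.
From mathcomp Require Import reals.
From mathcomp Require Import zify ring.
Import Order.TTheory GRing.Theory Num.Theory.
Local Open Scope ring_scope.

(* Within each period the Static-Fair shield replays the FinHzn shield from an
   empty history, so every block tau_i is a trace of that shield of length T
   and satisfies psi(tau_i) <= kappa.  Additivity and the equal denominators
   make each group's welfare on tau the average of its welfares on the blocks,
   so psi(tau) is the absolute value of the average of the blocks' welfare gaps,
   which is at most the average of the psi(tau_i). *)

Section Traces.
Context {R : realType} {C : seq R}.
Variable theta : {ffun X C -> R}.

Lemma ft_from_cat (pi : shield C) p s s' :
  ft_from theta pi p (s ++ s') = ft_from theta pi p s && ft_from theta pi (p ++ s) s'.
Proof.
elim: s p => [|[x y] s IH] p /=; first by rewrite cats0.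
by rewrite IH -cats1 -catA /= !andbA.
Qed.

Lemma ft_from_concatenation {pistar pi : shield C} {T : nat} {pre : trace C} {j : nat} :
  concatenation T (fun=> pistar) pi -> size pre = (j * T)%N ->
  forall s p, (size p + size s <= T)%N ->
  ft_from theta pi (pre ++ p) s = ft_from theta pistar p s.
Proof.
move=> hcat hpre; elim=> [|[x y] s IH] p //= hs.
rewrite (hcat j) //; last by move: hs; rewrite /=; lia.
by rewrite rcons_cat IH // size_rcons; move: hs => /=; lia.
Qed.

Lemma FT_concatenation_blocks {pistar pi : shield C} {T : nat} {taus : seq (trace C)}
    (pre : trace C) (j : nat) :
  concatenation T (fun=> pistar) pi -> (forall s, s \in taus -> size s = T) ->
  size pre = (j * T)%N -> ft_from theta pi pre (flatten taus) ->
  forall s, s \in taus -> FT theta pistar T s.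
Proof.
move=> hcat; elim: taus pre j => [|t ts IH] pre j hsize hpre //=.
have ht : size t = T by apply: hsize; rewrite mem_head.
rewrite ft_from_cat => /andP[hft hfts] s; rewrite inE => /orP[/eqP -> | hs].
  by rewrite /FT ht eqxx -(ft_from_concatenation hcat hpre t [::]) ?cats0 //= ht.
apply: (IH (pre ++ t) j.+1) hfts s hs.
  by move=> u hu; apply: hsize; rewrite inE hu orbT.
by rewrite size_cat hpre ht; lia.
Qed.

Lemma FT_exists (pi : shield C) n :
  distribution theta -> exists tau, FT theta pi n tau.
Proof.
case=> theta_ge0 theta_sum1.
have [x0 theta_x0] : exists x0, 0 < theta x0.
  case: (pickP (fun x => 0 < theta x)) => [x0 hx0 | hnone]; first by exists x0.
  suff : \sum_x theta x = 0 by rewrite theta_sum1; move/eqP; rewrite oner_eq0.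
  by apply: big1 => x _; apply/eqP; rewrite eq_le theta_ge0 andbT leNgt hnone.
suff extend p : exists tau, (size tau == n) && ft_from theta pi p tau by exact: extend.
elim: n p => [|n IH] p; first by exists [::].
have [tau /andP[/eqP hsize hft]] := IH (rcons p (x0, pi p x0)).
by exists ((x0, pi p x0) :: tau); rewrite /= hsize theta_x0 !eqxx hft.
Qed.

End Traces.

Section DifferenceOfRatios.
Context {R : realType} {C : seq R}.
Context {num den : grp -> statistic C}.

Lemma dor_ge0 tau : 0 <= dor num den tau :> R.
Proof. by rewrite /dor; case: ifP. Qed.

Lemma fair_dor_kappa_ge0 {theta : {ffun X C -> R}} {kappa : R} {T : nat}
    {pistar : shield C} :
  distribution theta -> fair theta (dor num den) kappa T pistar -> 0 <= kappa.
Proof.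
move=> htheta hfair; have [tau hFT] := FT_exists theta pistar T htheta.
exact: le_trans (dor_ge0 tau) (hfair tau hFT).
Qed.

Lemma additive_stat_nil {mu : statistic C} : additive_stat mu -> mu [::] = 0%N.
Proof. by move=> hmu; have := hmu [::] [::]; rewrite cat0s; lia. Qed.

Lemma additive_stat_flatten {mu : statistic C} (ss : seq (trace C)) :
  additive_stat mu -> mu (flatten ss) = (\sum_(s <- ss) mu s)%N.
Proof.
move=> hmu; elim: ss => [|s ss IH] /=; first by rewrite big_nil additive_stat_nil.
by rewrite hmu IH big_cons.
Qed.

Lemma dor_flatten_le {kappa : R} {taus : seq (trace C)} :
  is_DoR_decomp num den -> 0 <= kappa ->
  (forall g s1 s2, s1 \in taus -> s2 \in taus -> den g s1 = den g s2) ->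
  (forall s, s \in taus -> dor num den s <= kappa) ->
  dor num den (flatten taus) <= kappa.
Proof.
move=> hdor kappa_ge0 hden hblocks.
case: taus hden hblocks => [|t ts] hden hblocks.
  by rewrite /dor /= (additive_stat_nil (proj2 (hdor ga))).
set taus := t :: ts; set m := size taus.
have den_flatten g : den g (flatten taus) = (m * den g t)%N.
  rewrite additive_stat_flatten; last by case: (hdor g).
  rewrite (eq_big_seq (fun=> den g t)) => [|s hs].
    by rewrite big_const_seq count_predT iter_addn_0 mulnC.
  by apply: hden; rewrite ?mem_head.
have num_flatten g : (num g (flatten taus))%:R = \sum_(s <- taus) (num g s)%:R :> R.
  by rewrite additive_stat_flatten ?natr_sum //; case: (hdor g).
rewrite /dor !den_flatten !muln_eq0 /=.
case: eqP => [//|/eqP da0]; case: eqP => [//|/eqP db0] /=.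
pose gap s : R := (num ga s)%:R / (den ga t)%:R - (num gb s)%:R / (den gb t)%:R.
have dor_block s : s \in taus -> dor num den s = `|gap s|.
  by move=> hs; rewrite /dor !(hden _ s t) ?mem_head // (negbTE da0) (negbTE db0).
have -> : (num ga (flatten taus))%:R / (m * den ga t)%:R
        - (num gb (flatten taus))%:R / (m * den gb t)%:R
        = (\sum_(s <- taus) gap s) / m%:R.
  rewrite !num_flatten !natrM sumrB -!mulr_suml.
  by field; rewrite !pnatr_eq0 da0 db0.
rewrite normrM normfV normr_nat ler_pdivrMr ?ltr0n //.
have -> : kappa * m%:R = \sum_(s <- taus) kappa.
  by rewrite big_const_seq count_predT iter_addr_0 mulr_natr.
apply: le_trans (ler_norm_sum _ _ _) _.
rewrite !big_seq; apply: ler_sum => s hs.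
by rewrite -dor_block ?hblocks.
Qed.

End DifferenceOfRatios.

Theorem theorem6p2 (R : realType) (C : seq R) (hC : forall c, c \in C -> 0 <= c)
    (theta : {ffun X C -> R}) (htheta : distribution theta) (kappa : R)
    (num den : grp -> statistic C) (hdor : is_DoR_decomp num den)
    (T : nat) (pi : shield C)
    (hpi : StaticFair theta (dor num den) kappa T pi)
    (taus : seq (trace C))
    (hsize : forall s, s \in taus -> size s = T)
    (hFT : FT theta pi (size taus * T) (flatten taus))
    (hden : forall g s1 s2, s1 \in taus -> s2 \in taus -> den g s1 = den g s2) :
  dor num den (flatten taus) <= kappa.
Proof.
have [pistar [[pistar_fair _] hcat]] := hpi.
have blocks_FT :=
  FT_concatenation_blocks theta [::] 0 hcat hsize erefl (proj2 (andP hFT)).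
apply: dor_flatten_le hdor (fair_dor_kappa_ge0 htheta pistar_fair) hden _.
by move=> s /blocks_FT /pistar_fair.
Qed.
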